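(* Let $(u_1,v_1),(u_2,v_2)\in\mathbb{R}^2$ and let $d>\sqrt{(u_1-u_2)^2+(v_1-v_2)^2}$. Define the $2\times2$ symmetric matrix $$M(x,y)=\bigl(d^2+(u_1-u_2)(2x-u_1-u_2)+(v_1-v_2)(2y-v_1-v_2)\bigr)I_2+2d\begin{bmatrix}x-u_2 & y-v_2\\ y-v_2 & -x+u_2\end{bmatrix}.$$ Then $\det M(x,y)=\prod_{\epsilon_1,\epsilon_2\in\{\pm1\}}\bigl(d+\epsilon_1 r_1+\epsilon_2 r_2\bigr)$ where $r_i=\sqrt{(x-u_i)^2+(y-v_i)^2}$, and $$\{(x,y)\in\mathbb{R}^2: M(x,y)\succeq0\}=\{(x,y)\in\mathbb{R}^2: r_1+r_2\le d\}.$$ *)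

From HB Require Import structures.
From mathcomp Require Import all_boot all_order all_algebra.
From mathcomp Require Import reals.
Set Implicit Arguments. Unset Strict Implicit. Unset Printing Implicit Defensive.
Import Order.TTheory GRing.Theory Num.Theory.
Local Open Scope ring_scope.

Definition psd_mx (R : realType) (n : nat) (A : 'M[R]_n) : Prop :=
  A^T = A /\ forall v : 'cV[R]_n, 0 <= (v^T *m A *m v) 0 0.

Definition Mxy (R : realType) (u1 v1 u2 v2 d x y : R) : 'M[R]_2 :=
  (d ^+ 2 + (u1 - u2) * (2 * x - u1 - u2) + (v1 - v2) * (2 * y - v1 - v2))%:M
  + (2 * d) *: \matrix_(i < 2, j < 2)
      (if (i == 0) && (j == 0) then x - u2
       else if (i == 1) && (j == 1) then - x + u2
       else y - v2).

Definition dist2 (R : realType) (x y u v : R) : R :=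
  Num.sqrt ((x - u) ^+ 2 + (y - v) ^+ 2).

From HB Require Import structures.
From mathcomp Require Import all_boot all_order all_algebra.
From mathcomp Require Import reals.
From mathcomp Require Import ring lra.
Set Implicit Arguments. Unset Strict Implicit. Unset Printing Implicit Defensive.
Import Order.TTheory GRing.Theory Num.Theory.
Local Open Scope ring_scope.

(* With r_i the distance from (x, y) to the focus (u_i, v_i), the matrix M(x, y) is
   c I + 2d R, where c = d^2 + r_2^2 - r_1^2 and R = [[x - u_2, y - v_2], [y - v_2, u_2 - x]]
   is r_2 times a reflection, with eigenvalues +-r_2.  Hence det M = c^2 - 4 d^2 r_2^2, which
   factors into the four terms d +- r_1 +- r_2, and M is positive semidefinite iff
   2 d r_2 <= c, i.e. (d - r_2)^2 >= r_1^2.  The triangle inequality r_2 <= r_1 + |u_1 - u_2|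
   < r_1 + d excludes the branch d - r_2 <= -r_1, leaving r_1 + r_2 <= d. *)

Lemma ord2P (i : 'I_2) : i = 0 \/ i = 1.
Proof. by case: i => [[|[|//]] Hi]; [left | right]; apply/val_inj. Qed.

Lemma lift0_ord1 : lift ord0 (0 : 'I_1) = 1 :> 'I_2.
Proof. exact/val_inj. Qed.

Lemma det_mx2 (R : comPzRingType) (A : 'M[R]_2) :
  \det A = A 0 0 * A 1 1 - A 0 1 * A 1 0.
Proof.
rewrite (expand_det_row _ ord0) !big_ord_recl big_ord0 /cofactor !det_mx11 !mxE /=.
have lift_lift : lift (lift ord0 ord0) (0 : 'I_1) = 0 :> 'I_2 by apply/val_inj.
by rewrite lift_lift lift0_ord1 expr0 expr1 mul1r mulN1r addr0 mulrN.
Qed.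

Lemma quad_form_mx2 (R : comPzRingType) (A : 'M[R]_2) (v : 'cV[R]_2) :
  (v^T *m A *m v) 0 0 =
  v 0 0 * (v 0 0 * A 0 0 + v 1 0 * A 1 0) + v 1 0 * (v 0 0 * A 0 1 + v 1 0 * A 1 1).
Proof.
rewrite !mxE !big_ord_recl !big_ord0 !mxE !big_ord_recl !big_ord0 !mxE.
rewrite lift0_ord1 !addr0; ring.
Qed.

(* For a^2 + b^2 = r^2 this is r times a reflection, so its eigenvalues are r and -r. *)
Definition refl_mx (R : pzRingType) (a b : R) : 'M[R]_2 :=
  \matrix_(i < 2, j < 2) if i == j then (if i == 0 then a else - a) else b.

Section ScalarPlusReflection.
Variables (R : comPzRingType) (c a b : R).

Let A := c%:M + refl_mx a b.

Lemma scalar_refl_mxE :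
  [/\ A 0 0 = c + a, A 1 1 = c - a, A 0 1 = b & A 1 0 = b].
Proof. by rewrite /A /refl_mx !mxE /= ?mulr1n ?mulr0n ?add0r. Qed.

Lemma tr_scalar_refl_mx : A^T = A.
Proof.
have [A00 A11 A01 A10] := scalar_refl_mxE.
apply/matrixP => i j; rewrite mxE.
by case: (ord2P i) => ->; case: (ord2P j) => ->; rewrite ?A01 ?A10.
Qed.

Lemma det_scalar_refl_mx : \det A = c ^+ 2 - (a ^+ 2 + b ^+ 2).
Proof. by rewrite det_mx2; have [-> -> -> ->] := scalar_refl_mxE; ring. Qed.

Lemma quad_form_scalar_refl_mx (v : 'cV[R]_2) :
  (v^T *m A *m v) 0 0 =
  c * (v 0 0 ^+ 2 + v 1 0 ^+ 2) + (a * (v 0 0 ^+ 2 - v 1 0 ^+ 2) + 2 * b * v 0 0 * v 1 0).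
Proof. by rewrite quad_form_mx2; have [-> -> -> ->] := scalar_refl_mxE; ring. Qed.

End ScalarPlusReflection.

Lemma le_sqr_nonneg (R : realFieldType) (s t : R) : 0 <= t -> s ^+ 2 <= t ^+ 2 -> s <= t.
Proof. move=> t_ge0 st; nra. Qed.

(* Cauchy-Schwarz for (a, b) against (p^2 - q^2, 2 p q), whose norm is p^2 + q^2. *)
Lemma refl_form_lower_bound (R : realFieldType) (a b r p q : R) :
  0 <= r -> r ^+ 2 = a ^+ 2 + b ^+ 2 ->
  - (r * (p ^+ 2 + q ^+ 2)) <= a * (p ^+ 2 - q ^+ 2) + 2 * b * p * q.
Proof.
move=> r_ge0 rE; rewrite lerNl; apply: le_sqr_nonneg; first by nra.
rewrite sqrrN exprMn rE.
have : 0 <= (a * (2 * p * q) - b * (p ^+ 2 - q ^+ 2)) ^+ 2 by exact: sqr_ge0.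
nra.
Qed.

Lemma psd_scalar_refl_mx (R : realType) (c a b r : R) :
  0 <= r -> r ^+ 2 = a ^+ 2 + b ^+ 2 ->
  psd_mx (c%:M + refl_mx a b) <-> r <= c.
Proof.
move=> r_ge0 rE; split=> [[_ psdA] | r_le_c].
  pose form (p q : R) := c * (p ^+ 2 + q ^+ 2) + (a * (p ^+ 2 - q ^+ 2) + 2 * b * p * q).
  have form_ge0 p q : 0 <= form p q.
    have := psdA (\col_i (if i == 0 then p else q)).
    by rewrite quad_form_scalar_refl_mx !mxE.
  (* (b, -a - r) and (a - r, b) are eigenvectors for c - r, of total squared norm 4 r^2. *)
  have eigen_sum : form b (- a - r) + form (a - r) b = 4 * r ^+ 2 * (c - r).
    transitivity (2 * c * (a ^+ 2 + b ^+ 2 + r ^+ 2) - 4 * r * (a ^+ 2 + b ^+ 2)).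
      by rewrite /form; ring.
    by rewrite -rE; ring.
  have [-> | r_neq0] := eqVneq r 0.
    have := form_ge0 1 0; have := form_ge0 0 1.
    by rewrite /form; lra.
  have r2_gt0 : 0 < 4 * r ^+ 2.
    by rewrite mulr_gt0 ?exprn_gt0 // lt_neqAle eq_sym r_neq0.
  by rewrite -subr_ge0 -(pmulr_rge0 _ r2_gt0) -eigen_sum addr_ge0.
split; first exact: tr_scalar_refl_mx.
move=> v; rewrite quad_form_scalar_refl_mx.
have := refl_form_lower_bound (v 0 0) (v 1 0) r_ge0 rE.
have : 0 <= v 0 0 ^+ 2 + v 1 0 ^+ 2 by rewrite addr_ge0 ?sqr_ge0.
nra.
Qed.

Section Distance.
Variable R : realType.

Lemma dist2_ge0 (x y u v : R) : 0 <= dist2 x y u v.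
Proof. exact: sqrtr_ge0. Qed.

Lemma sqr_dist2 (x y u v : R) : dist2 x y u v ^+ 2 = (x - u) ^+ 2 + (y - v) ^+ 2.
Proof. by rewrite sqr_sqrtr // addr_ge0 ?sqr_ge0. Qed.

Lemma dist2_triangle (x y u v s t : R) :
  dist2 x y s t <= dist2 x y u v + dist2 u v s t.
Proof.
have := dist2_ge0 x y u v; have := dist2_ge0 u v s t.
have := sqr_dist2 x y u v; have := sqr_dist2 u v s t; have := sqr_dist2 x y s t.
set r := dist2 x y s t; set r1 := dist2 x y u v; set r2 := dist2 u v s t.
move=> rE r2E r1E r2_ge0 r1_ge0.
have inner_le : (x - u) * (u - s) + (y - v) * (v - t) <= r1 * r2.
  apply: le_sqr_nonneg; first exact: mulr_ge0.
  rewrite exprMn r1E r2E.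
  have : 0 <= ((x - u) * (v - t) - (y - v) * (u - s)) ^+ 2 by exact: sqr_ge0.
  nra.
apply: le_sqr_nonneg; first exact: addr_ge0.
rewrite rE; nra.
Qed.

Lemma Mxy_scalar_refl_mx (u1 v1 u2 v2 d x y : R) :
  Mxy u1 v1 u2 v2 d x y =
  (d ^+ 2 + dist2 x y u2 v2 ^+ 2 - dist2 x y u1 v1 ^+ 2)%:M
  + refl_mx (2 * d * (x - u2)) (2 * d * (y - v2)).
Proof.
rewrite /Mxy !sqr_dist2; congr (_%:M + _); first ring.
apply/matrixP => i j; rewrite !mxE.
by case: (ord2P i) => ->; case: (ord2P j) => -> /=; ring.
Qed.

End Distance.

(* (d - r2)^2 - r1^2 = (d - r2 - r1)(d - r2 + r1), and the second factor is positive. *)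
Lemma focal_sum_le_iff (R : realFieldType) (d D r1 r2 : R) :
  0 <= r1 -> r2 <= r1 + D -> D < d ->
  2 * d * r2 <= d ^+ 2 + r2 ^+ 2 - r1 ^+ 2 <-> r1 + r2 <= d.
Proof. move=> r1_ge0 r2_le D_lt_d; split=> ?; nra. Qed.

Theorem mainTheorem5 (R : realType) (u1 v1 u2 v2 d : R) :
  dist2 u1 v1 u2 v2 < d ->
  (forall x y : R,
     \det (Mxy u1 v1 u2 v2 d x y) =
     \prod_(e1 <- [:: 1; -1]) \prod_(e2 <- [:: 1; -1])
        (d + e1 * dist2 x y u1 v1 + e2 * dist2 x y u2 v2))
  /\
  (forall x y : R,
     psd_mx (Mxy u1 v1 u2 v2 d x y) <-> dist2 x y u1 v1 + dist2 x y u2 v2 <= d).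
Proof.
move=> D_lt_d; have d_ge0 : 0 <= d := ltW (le_lt_trans (dist2_ge0 _ _ _ _) D_lt_d).
have reflE x y : (2 * d * dist2 x y u2 v2) ^+ 2
                 = (2 * d * (x - u2)) ^+ 2 + (2 * d * (y - v2)) ^+ 2.
  by rewrite exprMn sqr_dist2; ring.
split=> x y; rewrite Mxy_scalar_refl_mx.
  rewrite det_scalar_refl_mx -reflE !big_cons !big_nil !mulr1; ring.
rewrite (psd_scalar_refl_mx _ _ (reflE x y)) ?mulr_ge0 ?dist2_ge0 //.
exact: (focal_sum_le_iff (dist2_ge0 _ _ _ _) (dist2_triangle _ _ _ _ _ _) D_lt_d).
Qed.
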